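(* Let $\mathcal{D}$ be a distribution over $\mathcal{X}\times\mathcal{Y}$ where $\mathcal{Y}\subseteq\mathbb{R}^d$ and $\|y\|_\infty\le M$ for all $y\in\mathcal{Y}$, let $\alpha>0$, and let $\mathcal{T}$ be a bucketing with width $w=\sqrt{\alpha/M}$. Let $\pi:\mathcal{X}\to\Omega$ be an arbitrary policy and let $h:\mathcal{X}\to\mathcal{Y}$ be an $\alpha$-self-consistent model that is also $\alpha$-consistent with respect to $\pi$. Then \[\mathbb{E}_{\mathcal{D}}[\pi_h(x)\cdot y]\ge \mathbb{E}_{\mathcal{D}}[\pi(x)\cdot y]-4d\sqrt{\alpha M}.\]
   Context: $\Omega\subseteq[0,1]^d$ is an arbitrary feasible set of actions; a policy is a map $\pi:\mathcal{X}\to\Omega$. For a model $h:\mathcal{X}\to\mathcal{Y}$, its induced policy is $\pi_h(x)=\arg\max_{a\in\Omega}a\cdot h(x)$. A bucketing $\mathcal{T}$ of width $w$ is a partition of $[0,1]$ into $1/w$ consecutive intervals $\tau$ of width $w$. A model $h$ is $\alpha$-consistent with respect to a collection $\mathcal{C}\subseteq 2^{\mathcal{X}}$ if for every $C\in\mathcal{C}$, $\|\mathbb{E}_{\mathcal{D}}[y-h(x)\mid x\in C]\|_\infty\le \alpha/\Pr[x\in C]$. The level sets of a policy $\pi$ are $\mathcal{C}^{\mathcal{T}}_\pi=\{\{x:\pi(x)_i\in\tau\}:i\in[d],\tau\in\mathcal{T}\}$. $h$ is $\alpha$-consistent with respect to a policy $\pi$ if it is $\alpha$-consistent with respect to $\mathcal{C}^{\mathcal{T}}_\pi$,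 and $\alpha$-self-consistent if it is $\alpha$-consistent with respect to $\pi_h$. *)

From HB Require Import structures.
From mathcomp Require Import all_boot all_order all_algebra.
From mathcomp Require Import all_classical all_reals all_analysis.
Set Implicit Arguments. Unset Strict Implicit. Unset Printing Implicit Defensive.
Import Order.TTheory GRing.Theory Num.Theory.
Local Open Scope classical_set_scope.
Local Open Scope ring_scope.

Section Defs.
Context {R : realType}.

Definition dotv (d : nat) (u v : 'rV[R]_d) : R := \sum_(i < d) u 0 i * v 0 i.

Definition supnorm_le (d : nat) (v : 'rV[R]_d) (M : R) : Prop :=
  forall i : 'I_d, `|v 0 i| <= M.

(* a bucketing of width w: a partition of [0,1] into k = 1/w consecutive
   intervals tau_0, ..., tau_{k-1}, tau_j having endpoints j*w and (j+1)*w
   (endpoint membership is left arbitrary, as in the paper) *)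
Definition is_bucketing (w : R) (k : nat) (tau : 'I_k -> set R) : Prop :=
  [/\ k%:R * w = 1,
      (forall j : 'I_k, tau j `<=` `[(j%:R * w), (j.+1%:R * w)]%classic),
      (forall j j' : 'I_k, j != j' -> tau j `&` tau j' = set0) &
      \bigcup_(j in [set: 'I_k]) tau j = `[0, 1]%classic].

Definition induced_policy {X : Type} (d : nat) (Omega : set 'rV[R]_d)
  (h : X -> 'rV[R]_d) (ph : X -> 'rV[R]_d) : Prop :=
  forall x, Omega (ph x) /\ forall a, Omega a -> dotv a (h x) <= dotv (ph x) (h x).

Context {dS dX : measure_display} {S : measurableType dS} {X : measurableType dX}.

(* The distribution D over X x Y is the joint law of (xs, ys) under P. *)
(* alpha-consistency of h on C (a subset of X):
   for all coordinates i, |E[y_i - h(x)_i | x in C]| <= alpha / Pr[x in C]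
   (the conditional expectation is only defined when Pr[x in C] > 0). *)
Definition consistent_on (P : probability S R) (d : nat) (xs : S -> X)
  (ys : S -> 'rV[R]_d) (h : X -> 'rV[R]_d) (alpha : R) (C : set X) : Prop :=
  let E := xs @^-1` C in
  let pC := fine (P E) in
  0 < pC ->
  forall i : 'I_d,
    `| Rintegral P E (fun s => ys s 0 i - h (xs s) 0 i) / pC | <= alpha / pC.

Definition consistent_wrt_policy (P : probability S R) (d : nat) (xs : S -> X)
  (ys : S -> 'rV[R]_d) (h : X -> 'rV[R]_d) (alpha : R) (k : nat)
  (tau : 'I_k -> set R) (pi : X -> 'rV[R]_d) : Prop :=
  forall (i : 'I_d) (j : 'I_k),
    consistent_on P xs ys h alpha [set x | tau j (pi x 0 i)].

Definition payoff (P : probability S R) (d : nat) (xs : S -> X)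
  (ys : S -> 'rV[R]_d) (pi : X -> 'rV[R]_d) : R :=
  Rintegral P setT (fun s => dotv (pi (xs s)) (ys s)).

End Defs.

From HB Require Import structures.
From mathcomp Require Import all_boot all_order all_algebra.
From mathcomp Require Import all_classical all_reals all_analysis.
From mathcomp Require Import ring lra.
Set Implicit Arguments.
Unset Strict Implicit.
Unset Printing Implicit Defensive.
Import Order.TTheory GRing.Theory Num.Theory.
Import numFieldNormedType.Exports.
Local Open Scope classical_set_scope.
Local Open Scope ring_scope.

(* Fix a policy q with actions in [0,1]^d on whose level sets h is
   alpha-consistent. Rounding each coordinate q_i to the midpoint of its
   bucket moves q_i by at most w/2 against the bounded residual y_i - h(x)_i
   (|y_i - h(x)_i| <= 2M), and on each of the k = 1/w buckets the
   consistency bias is at most alpha, so the rounded coordinate contributes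
   at most k alpha. With w = sqrt(alpha/M) both errors equal sqrt(alpha M),
   so E[q.y] and E[q.h] differ by at most 2 d sqrt(alpha M). Applied to pi_h
   and pi, and combined with E[pi.h] <= E[pi_h.h] (pi_h maximises a.h(x)
   pointwise), this gives the theorem. *)

Section bounded_measurable.
Context d (T : measurableType d) (R : realType).
Implicit Types (f g : T -> R) (E : set T).

Definition bounded_measurable f :=
  measurable_fun setT f /\ exists B : R, forall s, `|f s| <= B.

Lemma bounded_measurable_cst (c : R) : bounded_measurable (fun=> c).
Proof. by split; [exact: measurable_cst | exists `|c|]. Qed.

Lemma bounded_measurableD f g : bounded_measurable f -> bounded_measurable g ->
  bounded_measurable (fun s => f s + g s).
Proof.
move=> [mf [B fB]] [mg [C gC]]; split.
  exact: measurable_realfun.measurable_funD.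
by exists (B + C) => s; rewrite (le_trans (ler_normD _ _)) ?lerD.
Qed.

Lemma bounded_measurableN f : bounded_measurable f ->
  bounded_measurable (fun s => - f s).
Proof.
move=> [mf [B fB]]; split; first exact: measurableT_comp.
by exists B => s; rewrite normrN.
Qed.

Lemma bounded_measurableB f g : bounded_measurable f -> bounded_measurable g ->
  bounded_measurable (fun s => f s - g s).
Proof.
by move=> bf bg; apply: bounded_measurableD => //; exact: bounded_measurableN.
Qed.

Lemma bounded_measurableM f g : bounded_measurable f -> bounded_measurable g ->
  bounded_measurable (fun s => f s * g s).
Proof.
move=> [mf [B fB]] [mg [C gC]]; split.
  exact: measurable_realfun.measurable_funM.
by exists (B * C) => s; rewrite normrM ler_pM.
Qed.

Lemma bounded_measurable_norm f : bounded_measurable f ->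
  bounded_measurable (fun s => `|f s|).
Proof.
move=> [mf [B fB]]; split; first exact: measurableT_comp.
by exists B => s; rewrite normr_id.
Qed.

Lemma bounded_measurable_patch E f : measurable E -> bounded_measurable f ->
  bounded_measurable (f \_ E).
Proof.
move=> mE [mf [B fB]]; split.
  by apply/(measurable_restrictT _ mE); exact: measurable_funS mf.
exists B => s; rewrite patchE; case: ifP => // _.
by rewrite normr0 (le_trans _ (fB s)).
Qed.

Lemma bounded_measurable_sum (I : Type) (r : seq I) (F : I -> T -> R) :
  (forall i, bounded_measurable (F i)) ->
  bounded_measurable (fun s => \sum_(i <- r) F i s).
Proof.
move=> bF; elim: r => [|i r IHr].
  by under eq_fun do rewrite big_nil; exact: bounded_measurable_cst.
by under eq_fun do rewrite big_cons; exact: bounded_measurableD.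
Qed.

Lemma bounded_measurable_dotv n (u v : T -> 'rV[R]_n) :
  (forall i, bounded_measurable (fun s => u s 0 i)) ->
  (forall i, bounded_measurable (fun s => v s 0 i)) ->
  bounded_measurable (fun s => dotv (u s) (v s)).
Proof.
by move=> bu bv; apply: bounded_measurable_sum => i; exact: bounded_measurableM.
Qed.

Variable P : probability T R.

Lemma bounded_measurable_integrable f : bounded_measurable f ->
  P.-integrable setT (EFin \o f).
Proof.
move=> [mf [B fB]]; apply: measurable_bounded_integrable => //.
  by rewrite (le_lt_trans (probability_le1 P measurableT)) ?ltry.
exists B; split; first by rewrite num_real.
by move=> C BC s _; exact: le_trans (fB s) (ltW BC).
Qed.

Lemma Rintegral_sum (I : Type) (r : seq I) (F : I -> T -> R) :
  (forall i, bounded_measurable (F i)) ->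
  \int[P]_s (\sum_(i <- r) F i s) = \sum_(i <- r) \int[P]_s F i s.
Proof.
move=> bF; elim: r => [|i r IHr].
  by under eq_Rintegral do rewrite big_nil; rewrite big_nil Rintegral_cst // mul0r.
under eq_Rintegral do rewrite big_cons.
rewrite big_cons RintegralD -?IHr //; apply: bounded_measurable_integrable => //.
exact: bounded_measurable_sum.
Qed.

Lemma normr_Rintegral_le f B : bounded_measurable f ->
  (forall s, `|f s| <= B) -> `|\int[P]_s f s| <= B.
Proof.
move=> bf fB.
have intf := bounded_measurable_integrable bf.
have -> : B = \int[P]_s B.
  by rewrite Rintegral_cst // (_ : fine (P setT) = 1) ?mulr1 // probability_setT.
rewrite (le_trans (le_normr_Rintegral _ intf)) // le_Rintegral //.
- exact/bounded_measurable_integrable/bounded_measurable_norm.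
- exact/bounded_measurable_integrable/bounded_measurable_cst.
Qed.

End bounded_measurable.

Lemma consistent_on_bias (R : realType) dS dX (S : measurableType dS)
    (X : measurableType dX) (P : probability S R) d (xs : S -> X)
    (ys : S -> 'rV[R]_d) (h : X -> 'rV[R]_d) (alpha : R) (C : set X) (i : 'I_d) :
  0 <= alpha -> measurable (xs @^-1` C) ->
  measurable_fun setT (fun s => ys s 0 i - h (xs s) 0 i) ->
  consistent_on P xs ys h alpha C ->
  `|\int[P]_(s in xs @^-1` C) (ys s 0 i - h (xs s) 0 i)| <= alpha.
Proof.
move=> alpha_ge0 mE mg; rewrite /consistent_on /=.
have := fine_ge0 (measure_ge0 P (xs @^-1` C)).
rewrite le_eqVlt => /predU1P[PE0 _ | PE_gt0 /(_ PE_gt0 i)].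
  have PE : P (xs @^-1` C) = 0%E.
    by rewrite -(fineK (fin_num_measure P _ mE)) -PE0.
  rewrite /Rintegral null_set_integral //= ?normr0 //.
  by apply/measurable_realfun.measurable_EFinP; exact: measurable_funS mg.
have PEinv_gt0 : 0 < (fine (P (xs @^-1` C)))^-1 by rewrite invr_gt0.
by rewrite normrM (ger0_norm (ltW PEinv_gt0)) ler_pM2r.
Qed.

Lemma measurable_between_itvoo_itvcc (R : realType) (A : set R) (a b : R) :
  `]a, b[%classic `<=` A -> A `<=` `[a, b]%classic -> measurable A.
Proof.
move=> oA Ac.
have mApoint c : measurable (A `&` [set c]).
  by have [->|->] := subset_set1 (@subIsetr _ A [set c]);
    [exact: measurable0 | exact: measurable_set1].
suff -> : A = `]a, b[%classic `|` (A `&` [set a]) `|` (A `&` [set b]).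
  by apply: measurableU => //; apply: measurableU => //; exact: measurable_itv.
apply/seteqP; split=> [r Ar | r [[/oA|[]]|[]]//].
have /andP[ar rb] : a <= r <= b by have := Ac r Ar; rewrite /= in_itv.
rewrite /setU /setI /=.
have [ra|ra] := eqVneq r a; first by left; right; rewrite -ra.
have [rb'|rb'] := eqVneq r b; first by right; rewrite -rb'.
by left; left; rewrite /= in_itv /= !lt_neqAle eq_sym ra rb' ar rb.
Qed.

Section bucketing.
Context (R : realType) (w : R) (k : nat) (tau : 'I_k -> set R).
Hypotheses (w_gt0 : 0 < w) (tauP : is_bucketing w tau).
Implicit Types (j : 'I_k) (r : R).

Lemma bucket_cover r : 0 <= r <= 1 -> exists j, tau j r.
Proof.
case: tauP => _ _ _ cover r01.
have [j _ rj] : (\bigcup_(j in [set: 'I_k]) tau j) r by rewrite cover /= in_itv.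
by exists j.
Qed.

Lemma bucket_bounds j r : tau j r -> j%:R * w <= r <= j.+1%:R * w.
Proof. by case: tauP => _ sub _ _ /sub; rewrite /= in_itv. Qed.

Lemma bucket_uniq j j' r : tau j r -> tau j' r -> j = j'.
Proof.
case: tauP => _ _ disj _ rj rj'; apply/eqP/negP => /negP /disj jj'.
by have : (tau j `&` tau j') r by []; rewrite jj'.
Qed.

Lemma bucket_interior j r : j%:R * w < r < j.+1%:R * w -> tau j r.
Proof.
case/andP=> jr rj; have [kw _ _ _] := tauP.
have r01 : 0 <= r <= 1.
  apply/andP; split.
  - exact: le_trans (mulr_ge0 (ler0n _ _) (ltW w_gt0)) (ltW jr).
  - by apply: (le_trans (ltW rj)); rewrite -[X in _ <= X]kw ler_pM2r // ler_nat.
have [j' rj'] := bucket_cover r01.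
have /andP[j'r rj'1] := bucket_bounds rj'.
have j'_lt : (j' < j.+1)%N.
  by rewrite -(ltr_nat R) -(ltr_pM2r w_gt0); exact: le_lt_trans j'r rj.
have j_lt : (j < j'.+1)%N.
  by rewrite -(ltr_nat R) -(ltr_pM2r w_gt0); exact: lt_le_trans jr rj'1.
suff -> : j = j' by [].
by apply/val_inj/eqP; rewrite eqn_leq -ltnS j_lt -ltnS j'_lt.
Qed.

Lemma measurable_bucket j : measurable (tau j).
Proof.
apply: (@measurable_between_itvoo_itvcc _ _ (j%:R * w) (j.+1%:R * w)).
- by move=> r; rewrite /= in_itv /= => /bucket_interior.
- by move=> r /bucket_bounds; rewrite /= in_itv.
Qed.

Definition bucket_mid (j : 'I_k) : R := (j%:R + 2^-1) * w.

Lemma bucket_mid_dist j r : tau j r -> `|r - bucket_mid j| <= w / 2.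
Proof.
move/bucket_bounds; rewrite /bucket_mid -natr1 !mulrDl mul1r => /andP[jr rj].
by rewrite ler_norml; apply/andP; split; lra.
Qed.

Lemma bucket_mid_bounds j : 0 <= bucket_mid j <= 1.
Proof.
have [kw _ _ _] := tauP.
have jk : j.+1%:R <= k%:R :> R by rewrite ler_nat.
rewrite /bucket_mid; apply/andP; split.
  by rewrite mulr_ge0 ?(ltW w_gt0) // addr_ge0 ?invr_ge0.
rewrite -[X in _ <= X]kw ler_pM2r //.
by apply: le_trans jk; rewrite -(natr1 j) lerD2l invf_le1 // ler1n.
Qed.

Section rounding.
Context dS (S : measurableType dS) (P : probability S R) (q g : S -> R).
Hypotheses (mq : measurable_fun setT q) (q01 : forall s, 0 <= q s <= 1)
  (bg : bounded_measurable g).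

Lemma measurable_preimage_bucket j : measurable (q @^-1` tau j).
Proof. by have := mq measurableT (measurable_bucket j); rewrite setTI. Qed.

Let rounded s := \sum_(j < k) bucket_mid j * (g \_ (q @^-1` tau j)) s.

Let rounded_bucket j s : tau j (q s) -> rounded s = bucket_mid j * g s.
Proof.
move=> qs; rewrite /rounded (bigD1 j) //= big1 ?addr0 => [|j' j'j].
  by rewrite patchE mem_set.
rewrite patchE ifF ?mulr0 //; apply/negP => /set_mem qs'.
by move: j'j; rewrite (bucket_uniq qs' qs) eqxx.
Qed.

Lemma normr_Rintegral_mul_le (G alpha : R) :
  (forall s, `|g s| <= G) ->
  (forall j, `|\int[P]_(s in q @^-1` tau j) g s| <= alpha) ->
  `|\int[P]_s (q s * g s)| <= w / 2 * G + k%:R * alpha.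
Proof.
move=> gG cell_bias.
have bterm j : bounded_measurable (fun s => bucket_mid j * (g \_ (q @^-1` tau j)) s).
  apply: bounded_measurableM; first exact: bounded_measurable_cst.
  exact: bounded_measurable_patch (measurable_preimage_bucket j) bg.
have brounded : bounded_measurable rounded by exact: bounded_measurable_sum.
have bqg : bounded_measurable (fun s => q s * g s).
  apply: bounded_measurableM => //; split => //; exists 1 => s.
  by have /andP[q0 q1] := q01 s; rewrite ger0_norm.
have rounding_error : `|\int[P]_s (q s * g s - rounded s)| <= w / 2 * G.
  apply: normr_Rintegral_le; first exact: bounded_measurableB.
  move=> s; have [j qs] := bucket_cover (q01 s).
  by rewrite (rounded_bucket qs) -mulrBl normrM ler_pM // bucket_mid_dist.
have rounded_bias : `|\int[P]_s rounded s| <= k%:R * alpha.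
  rewrite Rintegral_sum // (le_trans (ler_norm_sum _ _ _)) //.
  have -> : k%:R * alpha = \sum_(j < k) alpha by rewrite sumr_const card_ord mulr_natl.
  apply: ler_sum => j _.
  rewrite RintegralZl //; last first.
    apply/bounded_measurable_integrable/bounded_measurable_patch => //.
    exact: measurable_preimage_bucket.
  rewrite -Rintegral_mkcond normrM -[alpha]mul1r ler_pM //.
  by have /andP[m0 m1] := bucket_mid_bounds j; rewrite ger0_norm.
rewrite -(subrK (\int[P]_s rounded s) (\int[P]_s (q s * g s))) -RintegralB //;
  try exact: bounded_measurable_integrable.
by rewrite (le_trans (ler_normD _ _)) // lerD.
Qed.

End rounding.
End bucketing.

Section payoff.
Context (R : realType) dS dX (S : measurableType dS) (X : measurableType dX)
  (P : probability S R) (d : nat) (xs : S -> X) (ys : S -> 'rV[R]_d)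
  (Y : set 'rV[R]_d) (M : R) (h : X -> 'rV[R]_d).
Hypotheses (Y_bounded : forall v, Y v -> supnorm_le v M)
  (mxs : measurable_fun setT xs)
  (mys : forall i, measurable_fun setT (fun s => ys s 0 i))
  (Yys : forall s, Y (ys s)) (Yh : forall x, Y (h x))
  (mh : forall i, measurable_fun setT (fun x => h x 0 i)).

Definition predicted_payoff (q : X -> 'rV[R]_d) : R :=
  \int[P]_s dotv (q (xs s)) (h (xs s)).

Let bounded_ys i : bounded_measurable (fun s => ys s 0 i).
Proof. by split=> //; exists M => s; exact: Y_bounded (Yys s) i. Qed.

Let bounded_h i : bounded_measurable (fun s => h (xs s) 0 i).
Proof.
split; first exact: measurableT_comp (mh i) mxs.
by exists M => s; exact: Y_bounded (Yh _) i.
Qed.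

Let bounded_policy (q : X -> 'rV[R]_d) :
  (forall x i, 0 <= q x 0 i <= 1) ->
  (forall i, measurable_fun setT (fun x => q x 0 i)) ->
  forall i, bounded_measurable (fun s => q (xs s) 0 i).
Proof.
move=> q01 mq i; split; first exact: measurableT_comp (mq i) mxs.
by exists 1 => s; have /andP[q0 q1] := q01 (xs s) i; rewrite ger0_norm.
Qed.

Lemma le_predicted_payoff (q q' : X -> 'rV[R]_d) :
  (forall x i, 0 <= q x 0 i <= 1) ->
  (forall i, measurable_fun setT (fun x => q x 0 i)) ->
  (forall x i, 0 <= q' x 0 i <= 1) ->
  (forall i, measurable_fun setT (fun x => q' x 0 i)) ->
  (forall x, dotv (q x) (h x) <= dotv (q' x) (h x)) ->
  predicted_payoff q <= predicted_payoff q'.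
Proof.
move=> q01 mq q'01 mq' le_qq'; apply: le_Rintegral => //.
- exact/bounded_measurable_integrable/bounded_measurable_dotv/bounded_h/bounded_policy.
- exact/bounded_measurable_integrable/bounded_measurable_dotv/bounded_h/bounded_policy.
Qed.

Lemma normr_payoff_sub_predicted (alpha w : R) (k : nat) (tau : 'I_k -> set R)
    (q : X -> 'rV[R]_d) :
  0 < w -> is_bucketing w tau -> 0 <= alpha ->
  (forall x i, 0 <= q x 0 i <= 1) ->
  (forall i, measurable_fun setT (fun x => q x 0 i)) ->
  consistent_wrt_policy P xs ys h alpha tau q ->
  `|payoff P xs ys q - predicted_payoff q| <= d%:R * (w * M + k%:R * alpha).
Proof.
move=> w_gt0 tauP alpha_ge0 q01 mq q_cons.
have bq := bounded_policy q01 mq.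
rewrite /payoff /predicted_payoff -RintegralB //; last 2 first.
- exact/bounded_measurable_integrable/bounded_measurable_dotv.
- exact/bounded_measurable_integrable/bounded_measurable_dotv.
have -> : \int[P]_s (dotv (q (xs s)) (ys s) - dotv (q (xs s)) (h (xs s))) =
    \sum_(i < d) \int[P]_s (q (xs s) 0 i * (ys s 0 i - h (xs s) 0 i)).
  rewrite -Rintegral_sum => [|i]; last exact/bounded_measurableM/bounded_measurableB.
  apply: eq_Rintegral => s _; rewrite /dotv -sumrB.
  by apply: eq_bigr => i _; rewrite mulrBr.
rewrite (le_trans (ler_norm_sum _ _ _)) //.
have -> : d%:R * (w * M + k%:R * alpha) = \sum_(i < d) (w * M + k%:R * alpha).
  by rewrite sumr_const card_ord mulr_natl.
apply: ler_sum => i _.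
have -> : w * M = w / 2 * (2 * M) by field.
have mqi : measurable_fun setT (fun s => q (xs s) 0 i).
  exact: measurableT_comp (mq i) mxs.
have bg := bounded_measurableB (bounded_ys i) (bounded_h i).
apply: (normr_Rintegral_mul_le w_gt0 tauP mqi _ bg) => [s|s|j].
- exact: q01.
- rewrite (le_trans (ler_normB _ _)) // mulr2n mulrDl mul1r.
  by rewrite lerD //; exact: Y_bounded.
- apply: consistent_on_bias bg.1 (q_cons i j) => //.
  exact (measurable_preimage_bucket w_gt0 tauP mqi j).
Qed.

End payoff.

Unset Implicit Arguments.

Theorem lemma4 (R : realType) (dS dX : measure_display)
  (S : measurableType dS) (X : measurableType dX) (P : probability S R)
  (d : nat) (xs : S -> X) (ys : S -> 'rV[R]_d)
  (Y : set 'rV[R]_d) (M alpha : R) (Omega : set 'rV[R]_d)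
  (k : nat) (tau : 'I_k -> set R)
  (pi h ph : X -> 'rV[R]_d) :
  0 < M -> 0 < alpha ->
  (forall v, Y v -> supnorm_le v M) ->
  measurable_fun setT xs ->
  (forall i : 'I_d, measurable_fun setT (fun s => ys s 0 i)) ->
  (forall s, Y (ys s)) ->
  (forall a, Omega a -> forall i : 'I_d, 0 <= a 0 i <= 1) ->
  is_bucketing (Num.sqrt (alpha / M)) tau ->
  (forall x, Omega (pi x)) ->
  (forall i : 'I_d, measurable_fun setT (fun x => pi x 0 i)) ->
  (forall x, Y (h x)) ->
  (forall i : 'I_d, measurable_fun setT (fun x => h x 0 i)) ->
  induced_policy Omega h ph ->
  (forall i : 'I_d, measurable_fun setT (fun x => ph x 0 i)) ->
  consistent_wrt_policy P xs ys h alpha tau ph ->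
  consistent_wrt_policy P xs ys h alpha tau pi ->
  payoff P xs ys ph >= payoff P xs ys pi - 4 * d%:R * Num.sqrt (alpha * M).
Proof.
move=> M_gt0 alpha_gt0 YM mxs mys Yys Omega01 tauP Omega_pi mpi Yh mh ph_max mph
  ph_cons pi_cons.
set w := Num.sqrt (alpha / M) in tauP.
have w_gt0 : 0 < w by rewrite sqrtr_gt0 divr_gt0.
have alphaE : alpha = w ^+ 2 * M.
  by rewrite sqr_sqrtr ?divfK ?gt_eqF // ltW // divr_gt0.
have sqrt_alphaM : Num.sqrt (alpha * M) = w * M.
  by rewrite alphaE -mulrA -expr2 -exprMn sqrtr_sqr ger0_norm // mulr_ge0 ?ltW.
have k_alpha : k%:R * alpha = w * M.
  have [kw _ _ _] := tauP.
  have -> : k%:R * alpha = k%:R * w * (w * M) by rewrite alphaE; ring.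
  by rewrite kw mul1r.
have pi01 x i : 0 <= pi x 0 i <= 1 by exact: Omega01.
have ph01 x i : 0 <= ph x 0 i <= 1 by exact: Omega01 (ph_max x).1 i.
have ph_bias := normr_payoff_sub_predicted YM mxs mys Yys Yh mh w_gt0 tauP
  (ltW alpha_gt0) ph01 mph ph_cons.
have pi_bias := normr_payoff_sub_predicted YM mxs mys Yys Yh mh w_gt0 tauP
  (ltW alpha_gt0) pi01 mpi pi_cons.
have pi_le_ph : predicted_payoff P xs h pi <= predicted_payoff P xs h ph.
  apply: (le_predicted_payoff P YM mxs Yh mh) pi01 mpi ph01 mph _ => x.
  exact: (ph_max x).2 _ (Omega_pi x).
move: ph_bias pi_bias; rewrite sqrt_alphaM k_alpha !ler_norml.
move=> /andP[ph_ge _] /andP[_ pi_le]; lra.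
Qed.
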